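(* Let $M$ be a primitively $n$-universal $R$-lattice of rank $m\ge 2n$. (a) If $m = 2n$, then $FM$ is hyperbolic. (b) If $m = 2n+1$, then $FM \cong \mathbb{H}^n\perp\langle (-1)^n dM\rangle$. (c) If $m = 2n+2$ and $dM = (-1)^{n+1}$, then $FM$ is hyperbolic.
   Context: $F$ is a nonarchimedean local field of characteristic not $2$ with ring of integers $R$. An $R$-lattice is a finitely generated $R$-submodule $M$ of a quadratic space $(V,B)$ over $F$, assumed integral ($B(M,M)\subseteq R$) and nondegenerate; $FM$ is the quadratic $F$-space spanned by $M$. A representation is an $R$-linear map preserving $B$, primitive if its image is a direct summand; $M$ is primitively $n$-universal if it primitively represents every $R$-lattice of rank $n$. The discriminant $dM$ is the determinant of a Gram matrix of $M$, taken modulo $(R^\times)^2$. $\mathbb{H}^n$ denotes the orthogonal sum of $n$ hyperbolic planes (a space is hyperbolic if it is such a sum), and $\langle c\rangle$ the one-dimensional space with $Q(v)=c$ for a basis vector $v$. *)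

From HB Require Import structures.
From mathcomp Require Import all_boot all_order all_algebra.
Set Implicit Arguments. Unset Strict Implicit. Unset Printing Implicit Defensive.
Import Order.TTheory GRing.Theory Num.Theory.
Local Open Scope ring_scope.

(* A normalized discrete valuation v : F^x -> Z (the value at 0 is irrelevant;
   v 0 = +oo is handled by the explicit zero tests below). *)

Section LocalField.
Variables (F : fieldType) (v : F -> int).

Definition inR (x : F) : bool := (x == 0) || (0 <= v x).
Definition unitR (x : F) : bool := (x != 0) && (v x == 0).
Definition vclose (k : int) (x y : F) : bool := (x == y) || (k <= v (x - y)).

Definition discrete_valuation : Prop :=
  [/\ (forall x y : F, x != 0 -> y != 0 -> v (x * y) = v x + v y),
      (forall x y : F, x != 0 -> y != 0 -> x + y != 0 ->
          (v x <= v (x + y)) || (v y <= v (x + y)))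
    & (exists pi : F, pi != 0 /\ v pi = 1)].

Definition v_cauchy (a : nat -> F) : Prop :=
  forall k : int, exists N : nat, forall i j : nat,
    (N <= i)%N -> (N <= j)%N -> vclose k (a i) (a j).

Definition v_converges (a : nat -> F) (L : F) : Prop :=
  forall k : int, exists N : nat, forall i : nat, (N <= i)%N -> vclose k (a i) L.

Definition v_complete : Prop :=
  forall a : nat -> F, v_cauchy a -> exists L : F, v_converges a L.

Definition finite_residue_field : Prop :=
  exists s : seq F, all inR s /\
    forall x : F, inR x -> exists2 r, r \in s & vclose 1 x r.

Definition nonarch_local_field_char_ne2 : Prop :=
  [/\ discrete_valuation, v_complete, finite_residue_field & (2%:R : F) != 0].

Definition integral_mx (m n : nat) (A : 'M[F]_(m, n)) : Prop :=
  forall i j, inR (A i j).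

(* An (integral, nondegenerate) R-lattice of rank n, given by its Gram matrix
   B(e_i, e_j) in an R-basis e_1..e_n. *)
Definition lattice (n : nat) (G : 'M[F]_n) : Prop :=
  [/\ G^T = G, integral_mx G & \det G != 0].

(* Representation of the lattice with Gram matrix GN (rank n) by the lattice
   with Gram matrix GM (rank m): an R-linear map R^n -> R^m, x |-> x *m X,
   preserving B.  It is primitive if its image is a direct summand, i.e. the
   (injective) map has an R-linear retraction R^m -> R^n. *)
Definition prim_represents (n m : nat) (GM : 'M[F]_m) (GN : 'M[F]_n) : Prop :=
  exists X : 'M[F]_(n, m),
    [/\ integral_mx X, X *m GM *m X^T = GN &
        exists Z : 'M[F]_(m, n), integral_mx Z /\ X *m Z = 1%:M].

Definition prim_n_universal (n m : nat) (GM : 'M[F]_m) : Prop :=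
  forall GN : 'M[F]_n, lattice GN -> prim_represents GM GN.

Definition isometric (m1 m2 : nat) (G1 : 'M[F]_m1) (G2 : 'M[F]_m2) : Prop :=
  exists (P : 'M[F]_(m1, m2)) (Q : 'M[F]_(m2, m1)),
    [/\ P *m Q = 1%:M, Q *m P = 1%:M & P *m G2 *m P^T = G1].

(* Gram matrix of H^k = H _|_ ... _|_ H (k hyperbolic planes), basis
   e_0,f_0,e_1,f_1,...  with B(e_i,f_i) = 1 and all other pairings 0. *)
Definition hypmx (k : nat) : 'M[F]_(k.*2) :=
  \matrix_(i, j) (((i./2 == j./2) && (i != j))%:R : F).

Definition hyperbolic (m : nat) (G : 'M[F]_m) : Prop :=
  exists k : nat, isometric G (hypmx k).

Definition hyp_plus (n : nat) (c : F) : 'M[F]_(n.*2 + 1) :=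
  block_mx (hypmx n) 0 0 c%:M.

End LocalField.

(* Primitive n-universality gives, for every j, a primitive representation X_j of the
   rank-n lattice <pi^j, ..., pi^j> by M, with an integral retraction Z_j.  Integral
   matrices form a sequentially compact set (the residue field is finite and F is
   complete), so a subsequence converges to (X, Z) with X Z = 1 and X G X^T = 0: FM has
   an n-dimensional totally isotropic subspace.  In characteristic not 2 it extends to
   n hyperbolic planes, which split off: FM = H^n _|_ W with dim W = m - 2n and
   (-1)^n det W = det M up to squares.  Then W = 0 gives (a), W = <(-1)^n det M> gives
   (b), and for dim W = 2 the determinant condition makes W a hyperbolic plane (c). *)

From Stdlib Require Import ClassicalEpsilon Classical_Prop.
From HB Require Import structures.
From mathcomp Require Import all_boot all_order all_algebra zify ring.
Set Implicit Arguments. Unset Strict Implicit. Unset Printing Implicit Defensive.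
Import Order.TTheory GRing.Theory Num.Theory.
Local Open Scope ring_scope.

(** * Hyperbolic pairs in a symmetric bilinear space *)

Section HyperbolicPairs.
Variable F : fieldType.

Lemma mulmx_trE m n p (A : 'M[F]_(m, p)) (B : 'M[F]_(n, p)) i j :
  (A *m B^T) i j = (row i A *m (row j B)^T) 0 0.
Proof. by rewrite !mxE; apply: eq_bigr => k _; rewrite !mxE. Qed.

Lemma hypmxE p (i j : 'I_p.*2) :
  hypmx F p i j = ((((i : nat)./2 == (j : nat)./2) && ((i : nat) != j))%:R).
Proof. by rewrite mxE. Qed.

Lemma det_hypmx p : \det (hypmx F p) = (-1) ^+ p.
Proof.
elim: p => [|p IHp]; first by rewrite det_mx00.
have -> : hypmx F p.+1 = block_mx (hypmx F 1) 0 0 (hypmx F p) :> 'M_(2 + p.*2).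
  apply/matrixP => i j; rewrite [LHS]mxE -[i]splitK -[j]splitK.
  case: (split i) => a; case: (split j) => b;
    rewrite ?block_mxEul ?block_mxEur ?block_mxEdl ?block_mxEdr ?hypmxE ?mxE /=;
    rewrite -?[0 : F]/(false%:R : F); congr (_%:R);
    by rewrite -?(inj_eq val_inj) /=; have := ltn_ord a; have := ltn_ord b; lia.
rewrite [LHS](det_ublock (hypmx F 1) 0 (hypmx F p)) IHp exprS; congr (_ * _).
rewrite (expand_det_row _ 0) !big_ord_recr big_ord0 /= /cofactor !det_mx11 !mxE /=.
by rewrite expr0 expr1; ring.
Qed.

Lemma form2E (w : 'rV[F]_2) (W : 'M_2) (u : 'rV_2) : (w *m W *m u^T) 0 0 =
  (w 0 0 * W 0 0 + w 0 1 * W 1 0) * u 0 0 + (w 0 0 * W 0 1 + w 0 1 * W 1 1) * u 0 1.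
Proof.
rewrite !mxE !big_ord_recr big_ord0 /= !mxE !big_ord_recr !big_ord0 /=.
have -> : widen_ord (leqnSn 1) ord_max = 0 :> 'I_2 by apply: val_inj.
have -> : ord_max = 1 :> 'I_2 by apply: val_inj.
by ring.
Qed.

Lemma det_mx22 (W : 'M[F]_2) : \det W = W 0 0 * W 1 1 - W 0 1 * W 1 0.
Proof.
rewrite (expand_det_row _ 0) !big_ord_recr big_ord0 /= /cofactor !det_mx11 !mxE /=.
have -> : widen_ord (leqnSn 1) ord_max = 0 :> 'I_2 by apply: val_inj.
have -> : lift 0 0 = 1 :> 'I_2 by apply: val_inj.
have -> : ord_max = 1 :> 'I_2 by apply: val_inj.
have -> : lift 1 0 = 0 :> 'I_2 by apply: val_inj.
by rewrite expr0 expr1; ring.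
Qed.

Lemma binary_isotropic_dual (W : 'M[F]_2) s : W^T = W -> s != 0 -> \det W = - s ^+ 2 ->
  exists w u : 'rV_2, w *m W *m w^T = 0 /\ w *m W *m u^T = 1%:M.
Proof.
move=> symW s_neq0; rewrite det_mx22.
have W10 : W 1 0 = W 0 1 by rewrite -[in LHS]symW mxE.
rewrite W10 => detW.
have mx11E (A B : 'M[F]_1) : A 0 0 = B 0 0 -> A = B.
  by move=> AB; rewrite [A]mx11_scalar [B]mx11_scalar AB.
case: (eqVneq (W 0 0) 0) => W00.
  have W01 : W 0 1 != 0.
    apply: contra_neq s_neq0 => W01.
    by apply/eqP; rewrite -sqrf_eq0 -oppr_eq0 -detW W00 W01 !mul0r subr0.
  exists (\row_j (j == 0)%:R), (\row_j ((j == 1)%:R * (W 0 1)^-1)); split.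
    by apply: mx11E; rewrite form2E !mxE /= W10 W00; ring.
  by apply: mx11E; rewrite form2E !mxE /= W10 W00 mulr1n; field.
(* With a = W 0 0, b = W 0 1, c = W 1 1 and b^2 - a c = s^2, the row (s - b, a) is isotropic. *)
exists (\row_j (if j == 0 then s - W 0 1 else W 0 0)), (\row_j ((j == 0)%:R * (W 0 0 * s)^-1)).
have W11 : W 1 1 = (W 0 1 ^+ 2 - s ^+ 2) / W 0 0.
  by apply: (mulfI W00); rewrite mulrCA mulfV // mulr1 -detW; ring.
split; apply: mx11E; rewrite form2E !mxE /= W10; first by rewrite W11; field.
by rewrite mulr1n; field; rewrite W00 s_neq0.
Qed.

Lemma half_ltn p (i : 'I_p.*2) : ((i : nat)./2 < p)%N.
Proof. by rewrite ltn_half_double. Qed.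

Definition ord_half p (i : 'I_p.*2) : 'I_p := Ordinal (half_ltn i).

Section Form.
Variables (m : nat) (G : 'M[F]_m).
Hypothesis symG : G^T = G.

Local Notation "''[' A , B ]" := (A *m G *m B^T) (format "''[' A ,  B ]").

Lemma form_tr p q (A : 'M_(p, m)) (B : 'M_(q, m)) : '[A, B]^T = '[B, A].
Proof. by rewrite !trmx_mul trmxK symG mulmxA. Qed.

Lemma form_mull p q r (A : 'M_(p, q)) (B : 'M_(q, m)) (C : 'M_(r, m)) :
  '[A *m B, C] = A *m '[B, C].
Proof. by rewrite -!mulmxA. Qed.

Lemma form_mulr p q r (A : 'M_(p, q)) (B : 'M_(q, m)) (C : 'M_(r, m)) :
  '[C, A *m B] = '[C, B] *m A^T.
Proof. by rewrite trmx_mul !mulmxA. Qed.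

Lemma form_subl p q (A B : 'M_(p, m)) (C : 'M_(q, m)) : '[A - B, C] = '[A, C] - '[B, C].
Proof. by rewrite !mulmxBl. Qed.

Lemma form_subr p q (A B : 'M_(p, m)) (C : 'M_(q, m)) : '[C, A - B] = '[C, A] - '[C, B].
Proof. by rewrite linearB /= mulmxBr. Qed.

Lemma form_scalel p q a (A : 'M_(p, m)) (C : 'M_(q, m)) : '[a *: A, C] = a *: '[A, C].
Proof. by rewrite -!scalemxAl. Qed.

Lemma form_scaler p q a (A : 'M_(p, m)) (C : 'M_(q, m)) : '[C, a *: A] = a *: '[C, A].
Proof. by rewrite linearZ /= -scalemxAr. Qed.

Definition hyperbolic_pair p (X Y : 'M[F]_(p, m)) : Prop :=
  [/\ '[X, X] = 0, '[Y, Y] = 0 & '[X, Y] = 1%:M].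

(* Rows x_0, y_0, x_1, y_1, ...: the basis order of [hypmx]. *)
Definition interleave p (X Y : 'M[F]_(p, m)) : 'M[F]_(p.*2, m) :=
  \matrix_(i, k) (if odd i then Y else X) (ord_half i) k.

Lemma row_interleave p (X Y : 'M[F]_(p, m)) i :
  row i (interleave X Y) = row (ord_half i) (if odd i then Y else X).
Proof. by apply/rowP => k; rewrite !mxE. Qed.

Lemma form_interleave p (X Y : 'M_(p, m)) :
  hyperbolic_pair X Y -> '[interleave X Y, interleave X Y] = hypmx F p.
Proof.
case=> XX YY XY; have YX : '[Y, X] = 1%:M by rewrite -form_tr XY trmx1.
apply/matrixP => i j; rewrite mulmx_trE row_mul !row_interleave -row_mul -mulmx_trE hypmxE.
case oi: (odd i); case oj: (odd j); rewrite ?XX ?YY ?XY ?YX !mxE;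
  rewrite -?[0 : F]/(false%:R : F); congr (_%:R); rewrite -?(inj_eq val_inj) /=; lia.
Qed.

Lemma form_interleave_eq0 p r (X Y : 'M_(p, m)) (K : 'M_(r, m)) :
  '[K, interleave X Y] = 0 <-> '[K, X] = 0 /\ '[K, Y] = 0.
Proof.
split=> [/matrixP KE | [KX KY]]; last first.
  apply/matrixP => a i; rewrite mulmx_trE row_mul row_interleave -row_mul -mulmx_trE.
  by case: (odd i); rewrite ?KX ?KY !mxE.
have rowE (c : bool) (b : 'I_p) : exists i, row i (interleave X Y) = row b (if c then Y else X).
  have lt_cb : (c + b.*2 < p.*2)%N by have := ltn_ord b; case: c => /=; lia.
  exists (Ordinal lt_cb); rewrite row_interleave /= oddD odd_double addbF oddb.
  by congr (row _ _); apply: val_inj => /=; case: (c) => /=; lia.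
suff KXY c : '[K, if c then Y else X] = 0 by split; [apply: (KXY false) | apply: (KXY true)].
apply/matrixP => a b; have [i Ei] := rowE c b.
by rewrite mulmx_trE row_mul -Ei -row_mul -mulmx_trE KE !mxE.
Qed.

Lemma form_col_mx p q r s (A : 'M_(p, m)) (B : 'M_(q, m)) (C : 'M_(r, m)) (D : 'M_(s, m)) :
  '[col_mx A B, col_mx C D] = block_mx '[A, C] '[A, D] '[B, C] '[B, D].
Proof. by rewrite mul_col_mx tr_col_mx mul_col_row. Qed.

Lemma isometric_form p (T : 'M_(p, m)) : p = m -> '[T, T] \in unitmx -> isometric G '[T, T].
Proof.
move=> pm; subst p; set D := '[T, T] => unitD.
have symD : D^T = D by rewrite form_tr.
set P := G *m T^T *m invmx D.
have TP : T *m P = 1%:M by rewrite /P !mulmxA -/D mulmxV.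
exists P, T; split => //; first exact: mulmx1C.
have PD : P *m D = G *m T^T by rewrite /P -mulmxA mulVmx // mulmx1.
have trP : P^T = invmx D *m (T *m G) by rewrite /P !trmx_mul trmx_inv symD trmxK symG mulmxA.
by rewrite PD trP !mulmxA -/P (mulmx1C TP) mul1mx.
Qed.

Lemma orthogonal_complement p r (E : 'M_(p, m)) : (p + r)%N = m -> '[E, E] \in unitmx ->
  exists K : 'M_(r, m), '[K, E] = 0 /\ row_full (col_mx E K).
Proof.
move=> pr_m unitD.
have rankE : \rank E = p.
  apply/eqP; rewrite eqn_leq rank_leq_row /=.
  have := mxrankM_maxl (E *m G) E^T; have := mxrankM_maxl E G.
  by rewrite mxrank_unit // => h1 h2; apply: leq_trans h2 h1.
have rankC : \rank (E^C)%MS = r by rewrite mxrank_compl rankE -pr_m addKn.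
pose K1 := castmx (rankC, erefl m) (row_base (E^C)%MS).
have fullK1 : row_full (col_mx E K1).
  have sumE : (col_mx E K1 :=: E + E^C)%MS.
    apply: eqmx_trans (eqmx_sym (addsmxE E K1)) _.
    by apply: adds_eqmx => //; apply: eqmx_trans (eqmx_cast _ _) _; apply: eq_row_base.
  by rewrite /row_full sumE; apply: addsmx_compl_full.
pose A := '[K1, E] *m invmx '[E, E].
exists (K1 - A *m E); split.
  have AE : '[A *m E, E] = '[K1, E] by rewrite /A -!mulmxA (mulmxA E G) mulVmx // mulmx1.
  by rewrite !mulmxBl AE subrr.
have -> : col_mx E (K1 - A *m E) = block_mx 1%:M 0 (- A) 1%:M *m col_mx E K1.
  by rewrite mul_block_col !mul1mx mul0mx addr0 mulNmx addrC.
have fullL : row_full (block_mx 1%:M 0 (- A) 1%:M : 'M_(p + r)).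
  by rewrite row_full_unit unitmxE det_lblock !det1 mulr1 unitr1.
by rewrite /row_full (eqmxMfull _ fullL).
Qed.

Lemma det_form p (T : 'M_(p, m)) : p = m -> row_full T ->
  exists2 t, t != 0 & \det '[T, T] = t ^+ 2 * \det G.
Proof.
move=> pm; subst p; rewrite row_full_unit unitmxE unitfE => detT.
by exists (\det T); rewrite // !det_mulmx det_tr mulrAC expr2.
Qed.

Lemma isometric_hyp_block p r (X Y : 'M_(p, m)) (K : 'M_(r, m)) :
  hyperbolic_pair X Y -> '[K, X] = 0 -> '[K, Y] = 0 -> (p.*2 + r)%N = m ->
  \det '[K, K] != 0 -> isometric G (block_mx (hypmx F p) 0 0 '[K, K]).
Proof.
move=> XY KX KY prm detK.
have KE : '[K, interleave X Y] = 0 by apply/form_interleave_eq0.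
have EK : '[interleave X Y, K] = 0 by rewrite -form_tr KE trmx0.
have TT : '[col_mx (interleave X Y) K, col_mx (interleave X Y) K] = block_mx (hypmx F p) 0 0 '[K, K].
  by rewrite form_col_mx KE EK form_interleave.
rewrite -TT; apply: isometric_form => //.
by rewrite TT unitmxE det_ublock det_hypmx unitfE mulf_neq0 ?signr_eq0.
Qed.

Lemma hyperbolic_pair_split p r (X Y : 'M_(p, m)) :
  hyperbolic_pair X Y -> (p.*2 + r)%N = m ->
  exists K : 'M_(r, m), [/\ '[K, X] = 0, '[K, Y] = 0 &
    exists2 t, t != 0 & (-1) ^+ p * \det '[K, K] = t ^+ 2 * \det G].
Proof.
move=> XY prm; set E := interleave X Y.
have unitE : '[E, E] \in unitmx by rewrite form_interleave // unitmxE det_hypmx unitfE signr_eq0.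
have [K [KE fullT]] := orthogonal_complement prm unitE.
have EK : '[E, K] = 0 by rewrite -form_tr KE trmx0.
have [KX KY] := proj1 (form_interleave_eq0 X Y K) KE.
exists K; split => //; have [t t_neq0 detT] := det_form prm fullT.
by exists t; rewrite // -detT form_col_mx KE EK det_ublock form_interleave // det_hypmx.
Qed.

Hypothesis two_neq0 : 2%:R != 0 :> F.

Lemma hyperbolic_pair_of_dual p (X Y0 : 'M_(p, m)) : '[X, X] = 0 -> '[X, Y0] = 1%:M ->
  exists Y, hyperbolic_pair X Y.
Proof.
move=> XX XY0; set S := '[Y0, Y0].
have symS : S^T = S by rewrite form_tr.
have Y0X : '[Y0, X] = 1%:M by rewrite -form_tr XY0 trmx1.
have half2 : (2%:R^-1 + 2%:R^-1 : F) = 1 by rewrite -mulr2n -[(2%:R^-1) *+ 2]mulr_natl mulfV.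
(* Subtracting half of [S *m X] kills [S] and keeps the pairing with [X]. *)
exists (Y0 - 2%:R^-1 *: (S *m X)); split => //;
  rewrite ?form_subl !form_subr ?form_scalel !form_scaler ?form_mull ?form_mulr;
  rewrite -/S XX XY0 ?Y0X symS ?mul0mx ?mulmx0 ?scaler0 ?subr0 // mul1mx mulmx1.
by rewrite -addrA -opprD -scalerDl half2 scale1r subrr.
Qed.

Hypothesis detG_neq0 : \det G != 0.

Lemma isotropic_hyperbolic_pair p (X : 'M_(p, m)) (Z : 'M_(m, p)) :
  '[X, X] = 0 -> X *m Z = 1%:M -> exists Y, hyperbolic_pair X Y.
Proof.
move=> XX XZ; apply: (hyperbolic_pair_of_dual (Y0 := Z^T *m invmx G)) => //.
have unitG : G \in unitmx by rewrite unitmxE unitfE.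
by rewrite trmx_mul trmxK trmx_inv symG -mulmxA (mulmxA G) mulmxV // mul1mx.
Qed.

Lemma hyperbolic_pair_isometric p (X Y : 'M_(p, m)) :
  p.*2 = m -> hyperbolic_pair X Y -> isometric G (hypmx F p).
Proof.
move=> pm XY; rewrite -(form_interleave XY); apply: isometric_form => //.
by rewrite form_interleave // unitmxE det_hypmx unitfE signr_eq0.
Qed.

Lemma hyperbolic_pair_isometric_hyp_plus p (X Y : 'M_(p, m)) :
  m = p.*2.+1 -> hyperbolic_pair X Y -> isometric G (hyp_plus p ((-1) ^+ p * \det G)).
Proof.
move=> mE XY; have pm : (p.*2 + 1)%N = m by rewrite addn1.
have [K [KX KY [t t_neq0 detK]]] := hyperbolic_pair_split XY pm.
pose K' := t^-1 *: K.
have K'K' : '[K', K'] = ((-1) ^+ p * \det G)%:M.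
  rewrite form_scalel form_scaler [ '[K, K]]mx11_scalar !scale_scalar_mx; congr _%:M.
  move: detK; rewrite det_mx11 => /(congr1 ( *%R ((-1) ^+ p))); rewrite signrMK => ->.
  by field.
rewrite /hyp_plus -K'K'; apply: isometric_hyp_block XY _ _ pm _.
- by rewrite /K' form_scalel KX scaler0.
- by rewrite /K' form_scalel KY scaler0.
by rewrite K'K' det_scalar expr1 mulf_neq0 ?signr_eq0.
Qed.

Lemma hyperbolic_pair_isometric_succ p (X Y : 'M_(p, m)) :
  m = p.*2.+2 -> hyperbolic_pair X Y ->
  (exists2 u, u != 0 & \det G = (-1) ^+ p.+1 * u ^+ 2) -> isometric G (hypmx F p.+1).
Proof.
move=> mE XY [u u_neq0 detG]; have pm : (p.*2 + 2)%N = m by rewrite addn2.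
have [K [KX KY [t t_neq0 detK]]] := hyperbolic_pair_split XY pm.
have detKK : \det '[K, K] = - (t * u) ^+ 2.
  apply: (mulfI (_ : (-1) ^+ p != 0)); first by rewrite signr_eq0.
  by rewrite detK detG [(-1) ^+ p.+1]exprS; ring.
have [w [z [ww wz]]] := binary_isotropic_dual (form_tr K K) (mulf_neq0 t_neq0 u_neq0) detKK.
have XK : '[X, K] = 0 by rewrite -form_tr KX trmx0.
have YK : '[Y, K] = 0 by rewrite -form_tr KY trmx0.
case: XY => XX YY XY.
have [Y' XY'] : exists Y', hyperbolic_pair (col_mx X (w *m K)) Y'.
  apply: (hyperbolic_pair_of_dual (Y0 := col_mx Y (z *m K))); rewrite form_col_mx !form_mull !form_mulr.
    by rewrite XX XK KX mulmxA ww mulmx0 mul0mx block_mx0.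
  by rewrite XY XK KY mulmxA wz mulmx0 mul0mx -(scalar_mx_block p 1 1).
by rewrite -addn1; apply: (hyperbolic_pair_isometric _ XY'); rewrite mE addn1 doubleS.
Qed.

End Form.
End HyperbolicPairs.

(** * Valuations and sequential compactness *)

Lemma nat_dependent_choice (A : Type) (P : nat -> A -> Prop) (R : nat -> A -> A -> Prop) a0 :
  P 0%N a0 -> (forall k a, P k a -> exists b, R k a b /\ P k.+1 b) ->
  exists c : nat -> A, forall k, P k (c k) /\ R k (c k) (c k.+1).
Proof.
move=> P0 step.
have next k (a : {a | P k a}) : {b : {b | P k.+1 b} | R k (sval a) (sval b)}.
  case: a => a Pa; have [b [Rab Pb]] := constructive_indefinite_description _ (step k a Pa).
  by exists (exist _ b Pb).
pose fix c k : {a | P k a} :=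
  match k return {a | P k a} with 0 => exist _ a0 P0 | k'.+1 => sval (next k' (c k')) end.
by exists (fun k => sval (c k)) => k; split; [apply: svalP | apply: (svalP (next k (c k)))].
Qed.

Lemma infinitely_often_pigeonhole (T : finType) (P : T -> nat -> Prop) :
  (forall J, exists2 j, (J <= j)%N & exists t, P t j) ->
  exists t, forall J, exists2 j, (J <= j)%N & P t j.
Proof.
move=> often; apply: NNPP => none.
have finitely t : exists J, forall j, (J <= j)%N -> ~ P t j.
  apply: NNPP => inf_t; apply: none; exists t => J; apply: NNPP => no_j.
  by apply: inf_t; exists J => j Jj Ptj; apply: no_j; exists j.
have [bound boundP] := fin_all_exists finitely.
pose J := \max_t bound t.
have [j Jj [t Ptj]] := often J.
by apply: (boundP t j) Ptj; apply: leq_trans Jj; apply: leq_bigmax.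
Qed.

Section Valuation.
Variables (F : fieldType) (v : F -> int).
Hypothesis hv : discrete_valuation v.

(* [vge k x]: [x] lies in [pi^k R]; the test [x == 0] is needed since [v 0] is junk. *)
Definition vge (k : int) (x : F) : bool := (x == 0) || (k <= v x).

Lemma valuationM x y : x != 0 -> y != 0 -> v (x * y) = v x + v y.
Proof. by case: hv => vM _ _; apply: vM. Qed.

Lemma valuation1 : v 1 = 0.
Proof.
have one_neq0 : (1 : F) != 0 by rewrite oner_eq0.
by have := valuationM one_neq0 one_neq0; rewrite mulr1; lia.
Qed.

Lemma valuationN x : x != 0 -> v (- x) = v x.
Proof.
have N1_neq0 : (-1 : F) != 0 by rewrite oppr_eq0 oner_eq0.
have vN1 : v (-1) = 0 by have := valuationM N1_neq0 N1_neq0; rewrite mulrNN mulr1 valuation1; lia.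
by move=> x_neq0; rewrite -mulN1r valuationM // vN1 add0r.
Qed.

Lemma valuationV x : x != 0 -> v x^-1 = - v x.
Proof.
move=> x_neq0; have := valuationM x_neq0 (invr_neq0 x_neq0).
by rewrite mulfV // valuation1; lia.
Qed.

Lemma valuationX x k : x != 0 -> v (x ^+ k) = v x *+ k.
Proof.
move=> x_neq0; elim: k => [|k IHk]; first by rewrite expr0 valuation1.
by rewrite exprS valuationM ?expf_neq0 // IHk mulrS.
Qed.

Lemma vcloseE k x y : vclose v k x y = vge k (x - y).
Proof. by rewrite /vclose /vge subr_eq0. Qed.

Lemma vge0 k : vge k 0.
Proof. by rewrite /vge eqxx. Qed.

Lemma vge_le l k x : l <= k -> vge k x -> vge l x.
Proof. by rewrite /vge => lk /orP[x0 | kx]; rewrite ?x0 // (le_trans lk kx) orbT. Qed.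

Lemma vgeN k x : vge k (- x) = vge k x.
Proof. by rewrite /vge oppr_eq0; case: eqVneq => //= x_neq0; rewrite valuationN. Qed.

Lemma vgeD k x y : vge k x -> vge k y -> vge k (x + y).
Proof.
rewrite /vge; case: (eqVneq x 0) => [-> _|x_neq0] /=; first by rewrite add0r.
case: (eqVneq y 0) => [-> kx _|y_neq0] /=; first by rewrite addr0 kx orbT.
case: (eqVneq (x + y) 0) => //= xy_neq0 kx ky; case: hv => _ ultra _.
by case/orP: (ultra _ _ x_neq0 y_neq0 xy_neq0); [apply: le_trans kx | apply: le_trans ky].
Qed.

Lemma vgeB k x y : vge k x -> vge k y -> vge k (x - y).
Proof. by move=> kx ky; rewrite vgeD ?vgeN. Qed.

Lemma vgeM k l x y : vge k x -> vge l y -> vge (k + l) (x * y).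
Proof.
rewrite /vge mulf_eq0; case: (eqVneq x 0) => //= x_neq0; case: (eqVneq y 0) => //= y_neq0.
by rewrite valuationM // => kx ly; rewrite lerD.
Qed.

Lemma vge_eq0 x : (forall k : nat, vge k%:Z x) -> x = 0.
Proof. by move=> /(_ (absz (v x)).+1); rewrite /vge => /orP[/eqP // | ]; lia. Qed.

Lemma vge_pi_exp pi k : pi != 0 -> v pi = 1 -> vge k%:Z (pi ^+ k).
Proof. by move=> pi_neq0 v_pi; rewrite /vge valuationX // v_pi natz lexx orbT. Qed.

Definition vgemx k m n (A : 'M[F]_(m, n)) : Prop := forall i j, vge k (A i j).

Lemma vgemxD k m n (A B : 'M[F]_(m, n)) : vgemx k A -> vgemx k B -> vgemx k (A + B).
Proof. by move=> kA kB i j; rewrite mxE vgeD. Qed.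

Lemma vgemxM k l m n p (A : 'M[F]_(m, n)) (B : 'M[F]_(n, p)) :
  vgemx k A -> vgemx l B -> vgemx (k + l) (A *m B).
Proof.
move=> kA lB i j; rewrite mxE; apply: (big_ind (vge _)); [exact: vge0 | exact: vgeD |].
by move=> r _; apply: vgeM.
Qed.

Lemma vgemx_mulr_int k m n p (A : 'M[F]_(m, n)) (B : 'M[F]_(n, p)) :
  vgemx k A -> vgemx 0 B -> vgemx k (A *m B).
Proof. by rewrite -{2}[k]addr0; apply: vgemxM. Qed.

Lemma vgemx_mull_int k m n p (A : 'M[F]_(m, n)) (B : 'M[F]_(n, p)) :
  vgemx 0 A -> vgemx k B -> vgemx k (A *m B).
Proof. by rewrite -{2}[k]add0r; apply: vgemxM. Qed.

Lemma vgemx_tr k m n (A : 'M[F]_(m, n)) : vgemx k A -> vgemx k A^T.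
Proof. by move=> kA i j; rewrite mxE. Qed.

Lemma vgemx_scalar k n c : vge k c -> vgemx k (c%:M : 'M[F]_n).
Proof. by move=> kc i j; rewrite mxE; case: (i == j); rewrite ?mulr1n ?mulr0n ?vge0. Qed.

Lemma vgemx_eq0 m n (A : 'M[F]_(m, n)) : (forall k : nat, vgemx k%:Z A) -> A = 0.
Proof. by move=> kA; apply/matrixP => i j; rewrite mxE; apply: vge_eq0 => k; apply: kA. Qed.

Section Compactness.
Variables (s : seq F) (pi : F).
Hypothesis complete : v_complete v.
Hypothesis s_int : all (inR v) s.
Hypothesis s_residues : forall x, inR v x -> exists2 r, r \in s & vclose v 1 x r.
Hypotheses (pi_neq0 : pi != 0) (v_pi : v pi = 1).

Lemma vge_refine k (y c : F) : vge k%:Z (y - c) ->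
  exists r : seq_sub s, vge k.+1%:Z (y - (c + pi ^+ k * val r)).
Proof.
move=> kyc; have pik_neq0 : pi ^+ k != 0 by rewrite expf_neq0.
set z := (y - c) / pi ^+ k.
have z_int : inR v z.
  move: kyc; rewrite /inR /z /vge mulf_eq0 invr_eq0 (negbTE pik_neq0) orbF.
  case: eqVneq => //= yc_neq0 kyc.
  by rewrite valuationM ?invr_eq0 // valuationV // valuationX // v_pi; lia.
have [r rs zr] := s_residues z_int; exists (SeqSub rs) => /=.
have -> : y - (c + pi ^+ k * r) = pi ^+ k * (z - r).
  by rewrite mulrBr /z mulrCA mulfV // mulr1 opprD addrA.
by rewrite -addn1 PoszD; apply: vgeM; rewrite -?vcloseE ?vge_pi_exp.
Qed.

Variables (I : finType) (a : nat -> I -> F).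
Hypothesis a_int : forall j x, inR v (a j x).

Definition near k (c d : I -> F) := forall x, vge k%:Z (d x - c x).

Definition frequently_near k (c : I -> F) := forall J, exists2 j, (J <= j)%N & near k c (a j).

Lemma near_trans i j c d e : (i <= j)%N -> near i c d -> near j d e -> near i c e.
Proof.
move=> ij cd de x; rewrite -[e x](subrK (d x)) -addrA.
by apply: vgeD; [apply: (vge_le (k := j%:Z)); rewrite ?lez_nat | apply: cd].
Qed.

(* Of the finitely many balls [c + pi^k r + pi^(k+1) R], r a residue, covering the ball
   [c + pi^k R], one contains infinitely many terms. *)
Lemma frequently_near_refine k c :
  frequently_near k c -> exists c', near k c c' /\ frequently_near k.+1 c'.
Proof.
move=> kc; pose shift (f : {ffun I -> seq_sub s}) x := c x + pi ^+ k * val (f x).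
have [f kf] : exists f, frequently_near k.+1 (shift f).
  apply: infinitely_often_pigeonhole => J; have [j Jj kcj] := kc J; exists j => //.
  have [f kf] := fin_all_exists (fun x => vge_refine (kcj x)).
  by exists (finfun f) => x; rewrite /shift ffunE.
exists (shift f); split=> // x; rewrite /shift addrC addKr -[k%:Z]addr0.
by apply: vgeM; [apply: vge_pi_exp | apply: (allP s_int); apply: valP].
Qed.

Lemma cluster_point : exists L : I -> F, forall k J, exists2 j, (J <= j)%N & near k L (a j).
Proof.
have [c cP] : exists c : nat -> I -> F, forall k, frequently_near k (c k) /\ near k (c k) (c k.+1).
  apply: (nat_dependent_choice (a0 := fun=> 0)); last exact: frequently_near_refine.
  by move=> J; exists J => // x; rewrite subr0; apply: a_int.
have cauchy i d : near i (c i) (c (i + d)%N).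
  elim: d => [|d IHd]; first by move=> x; rewrite addn0 subrr vge0.
  by rewrite addnS; apply: (near_trans _ IHd (cP _).2); apply: leq_addr.
have c_cauchy x : v_cauchy v (fun i => c i x).
  move=> k; set K := `|k|%N; exists K => i j Ki Kj; rewrite vcloseE.
  have near_K l : (K <= l)%N -> vge K (c l x - c K x).
    by move=> Kl; have := cauchy K (l - K)%N x; rewrite subnKC.
  have -> : c i x - c j x = (c i x - c K x) - (c j x - c K x) by rewrite opprB addrA subrK.
  by apply: (vge_le (k := K%:Z)); [lia | apply: vgeB; apply: near_K].
have [L cL] := fin_all_exists (fun x => complete (c_cauchy x)).
exists L => k J; have [j Jj kj] := (cP k).1 J; exists j => // x.
have [N NL] := cL x k; set N' := maxn N k.
have -> : a j x - L x = (a j x - c k x) - (c N' x - c k x) - (L x - c N' x).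
  by rewrite opprB addrA subrK opprB addrA subrK.
apply: vgeB; first apply: vgeB; first exact: kj.
  by have := cauchy k (N' - k)%N x; rewrite subnKC ?leq_maxr.
by rewrite -vgeN opprB -vcloseE; apply: NL; apply: leq_maxl.
Qed.

End Compactness.
End Valuation.

Lemma integral_cluster_point (F : fieldType) (v : F -> int) :
  discrete_valuation v -> v_complete v -> finite_residue_field v ->
  forall (I : finType) (a : nat -> I -> F), (forall j x, inR v (a j x)) ->
  exists L : I -> F, forall k J : nat, exists2 j, (J <= j)%N & forall x, vge v k%:Z (a j x - L x).
Proof.
move=> hv complete [s [s_int s_residues]] I a a_int.
case: (hv) => _ _ [pi [pi_neq0 v_pi]].
exact: (cluster_point hv complete s_int s_residues pi_neq0 v_pi a_int).
Qed.

(** * Isotropic subspaces of primitively universal lattices *)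

Lemma isotropic_of_approx (F : fieldType) (v : F -> int) n m (G : 'M[F]_m)
    (XZ : nat -> 'M[F]_(n, m) * 'M[F]_(m, n)) :
  discrete_valuation v -> v_complete v -> finite_residue_field v -> integral_mx v G ->
  (forall j, [/\ integral_mx v (XZ j).1, integral_mx v (XZ j).2,
                 (XZ j).1 *m (XZ j).2 = 1%:M & vgemx v j%:Z ((XZ j).1 *m G *m (XZ j).1^T)]) ->
  exists (X : 'M_(n, m)) (Z : 'M_(m, n)), X *m Z = 1%:M /\ X *m G *m X^T = 0.
Proof.
move=> hv complete residues G_int XZ_spec.
pose a j (x : 'I_n * 'I_m + 'I_m * 'I_n) :=
  match x with inl (i, l) => (XZ j).1 i l | inr (l, i) => (XZ j).2 l i end.
have a_int j x : inR v (a j x).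
  by case: x => [[i l]|[l i]]; case: (XZ_spec j) => Xj_int Zj_int _ _; [apply: Xj_int | apply: Zj_int].
have [L aL] := integral_cluster_point hv complete residues a_int.
pose X := \matrix_(i, l) L (inl (i, l)); pose Z := \matrix_(l, i) L (inr (l, i)).
have close k : exists2 j, (k <= j)%N & vgemx v k%:Z (X - (XZ j).1) /\ vgemx v k%:Z (Z - (XZ j).2).
  have [j kj aLj] := aL k k; exists j => //; split=> i l; rewrite !mxE -(vgeN hv) opprB.
    exact: (aLj (inl (i, l))).
  exact: (aLj (inr (i, l))).
have [X_int Z_int] : vgemx v 0 X /\ vgemx v 0 Z.
  have [j _ [Xj Zj]] := close 0%N; case: (XZ_spec j) => Xj_int Zj_int _ _.
  by rewrite -[X](subrK (XZ j).1) -[Z](subrK (XZ j).2); split; apply: (vgemxD hv).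
exists X, Z; split.
  apply/eqP; rewrite -subr_eq0; apply/eqP; apply: vgemx_eq0 => k.
  have [j _ [Xj Zj]] := close k; case: (XZ_spec j) => Xj_int _ XZj _.
  have -> : X *m Z - 1%:M = (X - (XZ j).1) *m Z + (XZ j).1 *m (Z - (XZ j).2).
    by rewrite -XZj mulmxBl mulmxBr addrA subrK.
  by apply: (vgemxD hv); [apply: (vgemx_mulr_int hv) | apply: (vgemx_mull_int hv)].
apply: vgemx_eq0 => k; have [j kj [Xj _]] := close k; case: (XZ_spec j) => Xj_int _ _ XGXj.
have -> : X *m G *m X^T = (X - (XZ j).1) *m G *m X^T + (XZ j).1 *m G *m (X - (XZ j).1)^T
                          + (XZ j).1 *m G *m (XZ j).1^T.
  by rewrite linearB /= !mulmxBl !mulmxBr -addrA !subrK.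
apply: (vgemxD hv); first apply: (vgemxD hv).
- by apply: (vgemx_mulr_int hv); [apply: (vgemx_mulr_int hv) | apply: vgemx_tr].
- by apply: (vgemx_mull_int hv); [apply: (vgemx_mulr_int hv) | apply: vgemx_tr].
by move=> i l; apply: (vge_le (k := j%:Z)); rewrite ?lez_nat.
Qed.

Lemma prim_universal_isotropic (F : fieldType) (v : F -> int) n m (G : 'M[F]_m) :
  nonarch_local_field_char_ne2 v -> lattice v G -> prim_n_universal v n G ->
  exists (X : 'M_(n, m)) (Z : 'M_(m, n)), X *m Z = 1%:M /\ X *m G *m X^T = 0.
Proof.
case=> hv complete residues _ [_ G_int _] hU; case: (hv) => _ _ [pi [pi_neq0 v_pi]].
have pi_exp_lattice j : lattice v ((pi ^+ j)%:M : 'M_n).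
  split; [exact: tr_scalar_mx | | by rewrite det_scalar !expf_neq0].
  by apply: vgemx_scalar; apply: (vge_le (k := j%:Z)); last apply: vge_pi_exp.
have rep_pi_exp j : exists XZ : 'M_(n, m) * 'M_(m, n),
    [/\ integral_mx v XZ.1, integral_mx v XZ.2, XZ.1 *m XZ.2 = 1%:M & XZ.1 *m G *m XZ.1^T = (pi ^+ j)%:M].
  by have [X [X_int XGX [Z [Z_int XZ]]]] := hU _ (pi_exp_lattice j); exists (X, Z).
have [XZ XZ_spec] := ClassicalEpsilon.choice _ rep_pi_exp.
apply: (isotropic_of_approx hv complete residues G_int (XZ := XZ)) => j.
by case: (XZ_spec j) => X_int Z_int XZj ->; split=> //; apply/vgemx_scalar/vge_pi_exp.
Qed.

Theorem corollary2p7 (F : fieldType) (v : F -> int)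
  (hF : nonarch_local_field_char_ne2 v)
  (n m : nat) (GM : 'M[F]_m)
  (hM : lattice v GM) (hU : prim_n_universal v n GM)
  (hm : (n.*2 <= m)%N) :
  [/\ (m = n.*2 -> hyperbolic GM),
      (m = n.*2.+1 -> isometric GM (hyp_plus n ((-1) ^+ n * \det GM)))
    & (m = n.*2.+2 ->
         (exists u : F, unitR v u /\ \det GM = (-1) ^+ n.+1 * u ^+ 2) ->
         hyperbolic GM)].
Proof.
have [X [Z [XZ XGX]]] := prim_universal_isotropic hF hM hU.
case: hF => _ _ _ two_neq0; case: hM => symG _ detG_neq0.
have [Y XY] := isotropic_hyperbolic_pair symG two_neq0 detG_neq0 XGX XZ.
split=> [mE | mE | mE [u [/andP[u_neq0 _] detG]]].
- by exists n; apply: (hyperbolic_pair_isometric symG (esym mE) XY).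
- exact: (hyperbolic_pair_isometric_hyp_plus symG detG_neq0 mE XY).
by exists n.+1; apply: (hyperbolic_pair_isometric_succ symG two_neq0 mE XY); exists u.
Qed.
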